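(* Let $\mathcal{L}$ be a language with semantic structure $\mathcal{S}=(\Sigma,I)$, and assume $\mathcal{L}$ is closed under infinite logical conjunction. Let $\mathcal{S}^\sharp=(\mathrm{AD}_{\mathcal{L}},I^\sharp)$ be an abstract semantic structure on $\mathrm{AD}_{\mathcal{L}}$. If $[\![\cdot]\!]_{\mathcal{S}^\sharp}$ is strongly preserving for $\mathcal{L}$, then $I^\sharp=I^{\mathrm{AD}_{\mathcal{L}}}$.
   Context: A language $\mathcal{L}$ has formulae $\varphi::=p\mid f(\varphi_1,\dots,\varphi_n)$, $p$ in a set $AP$ of atoms, $f$ in a finite set $Op$ of operators of arity $\ge1$. A semantic structure $\mathcal{S}=(\Sigma,I)$ gives $\mathbf{p}=I(p)\subseteq\Sigma$ and $\mathbf{f}=I(f):\wp(\Sigma)^{n}\to\wp(\Sigma)$, with $[\![p]\!]_{\mathcal{S}}=\mathbf{p}$, $[\![f(\varphi_1,..)]\!]_{\mathcal{S}}=\mathbf{f}([\![\varphi_1]\!]_{\mathcal{S}},..)$. $\mathcal{L}$ is closed under infinite logical conjunction if for every $\Phi\subseteq\mathcal{L}$ (including $\Phi=\varnothing$) there is $\psi\in\mathcal{L}$ with $\bigcap_{\varphi\in\Phi}[\![\varphi]\!]_{\mathcal{S}}=[\![\psi]\!]_{\mathcal{S}}$ (empty intersection $=\Sigma$). $\mathrm{AD}_{\mathcal{L}}$ is the abstract domain of $\wp(\Sigma)_\subseteq$ whose elements are the intersections of subfamilies of $\{[\![\varphi]\!]_{\mathcal{S}}\mid\varphi\in\mathcal{L}\}$,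 ordered by inclusion, with $\alpha(S)=\bigcap\{[\![\varphi]\!]_{\mathcal{S}}\mid S\subseteq[\![\varphi]\!]_{\mathcal{S}}\}$ and $\gamma$ the inclusion. An abstract semantic structure $(A,I^\sharp)$ on an abstract domain $A$ (Galois insertion $(\alpha,\wp(\Sigma),A,\gamma)$) assigns $I^\sharp(p)\in A$ and $I^\sharp(f):A^n\to A$ and induces $[\![\cdot]\!]_{\mathcal{S}^\sharp}:\mathcal{L}\to A$ compositionally; it is strongly preserving for $\mathcal{L}$ if for all $\varphi$, $S$: $\alpha(S)\le_A[\![\varphi]\!]_{\mathcal{S}^\sharp}\iff S\subseteq[\![\varphi]\!]_{\mathcal{S}}$. The best-correct-approximation interpretation is $I^A(p)=\alpha(\mathbf{p})$, $I^A(f)=\alpha\circ\mathbf{f}\circ(\gamma,\dots,\gamma)$. *)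

From mathcomp Require Import all_boot.
From mathcomp Require Import boolp classical_sets.
Set Implicit Arguments. Unset Strict Implicit.
Arguments nat_of_ord : simpl never. Unset Printing Implicit Defensive.
Local Open Scope classical_set_scope.

Section Lang.
Variables (AP : Type) (Op : finType) (ar : Op -> nat).

Inductive formula : Type :=
| Atom of AP
| App (f : Op) of ('I_(ar f) -> formula).

Variable Sigma : Type.

Record sem_struct : Type := SemStruct {
  I_atom : AP -> set Sigma;
  I_op : forall f : Op, ('I_(ar f) -> set Sigma) -> set Sigma }.
Arguments I_op : clear implicits.

Fixpoint sem (S : sem_struct) (phi : formula) : set Sigma :=
  match phi with
  | Atom p => I_atom S p
  | App f args => I_op S f (fun i => sem S (args i))
  end.

Definition closed_inf_conj (S : sem_struct) : Prop :=
  forall Phi : set formula, exists psi : formula,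
    \bigcap_(phi in Phi) sem S phi = sem S psi.

Definition isAD (S : sem_struct) (X : set Sigma) : Prop :=
  exists Phi : set formula, X = \bigcap_(phi in Phi) sem S phi.

Definition AD (S : sem_struct) : Type := {X : set Sigma | isAD S X}.

Definition gammaAD (S : sem_struct) (a : AD S) : set Sigma := proj1_sig a.

Definition alpha_set (S : sem_struct) (X : set Sigma) : set Sigma :=
  \bigcap_(phi in [set phi | X `<=` sem S phi]) sem S phi.

Lemma alpha_isAD (S : sem_struct) (X : set Sigma) : isAD S (alpha_set S X).
Proof. by exists [set phi | X `<=` sem S phi]. Qed.

Definition alphaAD (S : sem_struct) (X : set Sigma) : AD S :=
  exist _ (alpha_set S X) (alpha_isAD S X).

Definition leAD (S : sem_struct) (a b : AD S) : Prop := gammaAD a `<=` gammaAD b.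

Record abs_struct (S : sem_struct) : Type := AbsStruct {
  Ia_atom : AP -> AD S;
  Ia_op : forall f : Op, ('I_(ar f) -> AD S) -> AD S }.
Arguments Ia_op : clear implicits.

Fixpoint asem (S : sem_struct) (Ia : abs_struct S) (phi : formula) : AD S :=
  match phi with
  | Atom p => Ia_atom Ia p
  | App f args => Ia_op S Ia f (fun i => asem Ia (args i))
  end.

Definition strongly_preserving (S : sem_struct) (Ia : abs_struct S) : Prop :=
  forall (phi : formula) (X : set Sigma),
    leAD (alphaAD S X) (asem Ia phi) <-> X `<=` sem S phi.

(* best correct approximation interpretation I^{AD_L} *)
Definition bca (S : sem_struct) : abs_struct S :=
  AbsStruct (fun p => alphaAD S (I_atom S p))
            (fun f a => alphaAD S (I_op S f (fun i => gammaAD (a i)))).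

End Lang.

(** A strongly preserving abstract semantics is forced to be the best
    abstraction of the concrete one, [asem phi = alpha [[phi]]]: the two
    directions of strong preservation, instantiated at [X = gamma (asem phi)]
    and at [X = [[phi]]], give the two inclusions.  Closure under infinite
    conjunction makes every element of AD_L the denotation of a formula, so
    every abstract argument tuple of an operator is the abstract semantics of
    a tuple of formulae, and the compositional clause for [f(phi_1,..,phi_n)]
    then pins down [I#(f)] as [alpha o f o gamma]. *)

From mathcomp Require Import all_boot.
From mathcomp Require Import boolp classical_sets.
Set Implicit Arguments. Unset Strict Implicit.
Local Open Scope classical_set_scope.

Section AbstractDomain.
Variables (AP : Type) (Op : finType) (ar : Op -> nat) (Sigma : Type)
  (S : @sem_struct AP Op ar Sigma).

Lemma gammaAD_inj : injective (@gammaAD AP Op ar Sigma S).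
Proof. by case=> X pX [Y pY] /= eXY; apply: eq_exist. Qed.

Lemma alpha_set_id (X : set Sigma) : isAD S X -> alpha_set S X = X.
Proof.
case=> Phi ->; apply/seteqP; split; last by move=> x Xx phi /= /(_ x Xx).
by apply: sub_bigcap => phi Phi_phi; apply: bigcap_inf; exact: bigcap_inf.
Qed.

Lemma isAD_sem (phi : formula AP ar) : isAD S (sem S phi).
Proof. by exists [set phi]; rewrite bigcap_set1. Qed.

Lemma alpha_set_gamma (a : AD S) : alpha_set S (gammaAD a) = gammaAD a.
Proof. by rewrite alpha_set_id //; case: a. Qed.

Lemma alpha_set_sem (phi : formula AP ar) : alpha_set S (sem S phi) = sem S phi.
Proof. exact/alpha_set_id/isAD_sem. Qed.

Lemma alphaAD_gamma (a : AD S) : alphaAD S (gammaAD a) = a.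
Proof. by apply: gammaAD_inj; rewrite /= alpha_set_gamma. Qed.

Lemma AD_sem_surj :
  closed_inf_conj S -> forall a : AD S, exists phi, gammaAD a = sem S phi.
Proof. by move=> Hconj [X [Phi eX]]; rewrite /= eX; exact: Hconj. Qed.

Lemma abs_struct_ext (Ia Ib : abs_struct S) :
  Ia_atom Ia =1 Ia_atom Ib ->
  (forall f (a : 'I_(ar f) -> AD S), Ia_op Ia a = Ia_op Ib a) -> Ia = Ib.
Proof.
case: Ia Ib => [ia io] [ib jo] /= /funext -> Eop.
by congr AbsStruct; apply: functional_extensionality_dep => f; exact: funext.
Qed.

End AbstractDomain.

Section StronglyPreserving.
Variables (AP : Type) (Op : finType) (ar : Op -> nat) (Sigma : Type)
  (S : @sem_struct AP Op ar Sigma) (Ia : abs_struct S).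
Hypothesis Hsp : strongly_preserving Ia.

Lemma gamma_asem_sem (phi : formula AP ar) : gammaAD (asem Ia phi) = sem S phi.
Proof.
apply/seteqP; split.
- by apply/(Hsp phi); rewrite /leAD /= alpha_set_gamma.
- by have /(Hsp phi) := @subset_refl _ (sem S phi); rewrite /leAD /= alpha_set_sem.
Qed.

Lemma asem_alphaAD (phi : formula AP ar) : asem Ia phi = alphaAD S (sem S phi).
Proof. by rewrite -gamma_asem_sem alphaAD_gamma. Qed.

Lemma Ia_atom_bca (p : AP) : Ia_atom Ia p = Ia_atom (bca S) p.
Proof. exact: (asem_alphaAD (Atom ar p)). Qed.

Lemma Ia_op_bca :
  closed_inf_conj S ->
  forall f (a : 'I_(ar f) -> AD S), Ia_op Ia a = Ia_op (bca S) a.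
Proof.
move=> Hconj f a; have [args Eargs] := choice (fun i => AD_sem_surj Hconj (a i)).
have -> : a = fun i => asem Ia (args i).
  by apply: funext => i; apply: gammaAD_inj; rewrite gamma_asem_sem Eargs.
rewrite -[LHS]/(asem Ia (App args)) (asem_alphaAD (App args)) /=.
by under [in RHS]eq_fun do rewrite gamma_asem_sem.
Qed.

End StronglyPreserving.

Theorem theorem5p5 (AP : Type) (Op : finType) (ar : Op -> nat)
  (ar_pos : forall f : Op, 0 < ar f)
  (Sigma : Type) (S : @sem_struct AP Op ar Sigma)
  (Hconj : closed_inf_conj S)
  (Ia : @abs_struct AP Op ar Sigma S)
  (Hsp : strongly_preserving Ia) :
  Ia = bca S.
Proof.
apply: abs_struct_ext; first exact: Ia_atom_bca.
exact: Ia_op_bca.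
Qed.
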